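(* For any finite alphabet $A$ and any $u\in A^*$: $h({\uparrow}u)=|u|$, and $h(I(\{u\}))=h({\uparrow}u\cup{\downarrow}u)$, which equals $|u|$ if $|A|\geq2$ and $0$ otherwise.
   Context: $u\sqsubseteq v$ (subword) means $u=a_1\cdots a_n$ with letters $a_i$ and $v=v_0a_1v_1\cdots a_nv_n$ for some words $v_i$. ${\uparrow}u=\{v\in A^*~|~u\sqsubseteq v\}$, ${\downarrow}u=\{v\in A^*~|~v\sqsubseteq u\}$. $u\perp v$ means $u\not\sqsubseteq v$ and $v\not\sqsubseteq u$, and $I(L)=\{w\in A^*~|~\exists v\in L: w\perp v\}$. $u\sim_n v$ iff $u,v$ have the same subwords of length at most $n$; $L$ is $n$-PT if it is a union of $\sim_n$-classes, and $h(L)$ is the least such $n$. *)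

From mathcomp Require Import all_boot.
Set Implicit Arguments. Unset Strict Implicit. Unset Printing Implicit Defensive.

Section Defs.
Variable A : finType.

Definition lang := seq A -> Prop.

Definition subword (u v : seq A) : bool := subseq u v.

Definition up (u : seq A) : lang := fun v => subword u v.
Definition down (u : seq A) : lang := fun v => subword v u.
Definition lunion (L M : lang) : lang := fun w => L w \/ M w.
Definition singleton (u : seq A) : lang := fun v => v = u.

Definition incomp (u v : seq A) : Prop := ~~ subword u v /\ ~~ subword v u.

Definition Inc (L : lang) : lang := fun w => exists v, L v /\ incomp w v.

Definition simn (n : nat) (u v : seq A) : Prop :=
  forall w : seq A, size w <= n -> subword w u = subword w v.

Definition nPT (n : nat) (L : lang) : Prop :=
  forall u v, simn n u v -> (L u <-> L v).

Definition is_h (L : lang) (n : nat) : Prop :=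
  nPT n L /\ forall m, nPT m L -> n <= m.
End Defs.

From mathcomp Require Import all_boot zify.
Set Implicit Arguments. Unset Strict Implicit. Unset Printing Implicit Defensive.

(** Both languages are closed under [~_n] for [n = |u|]: this is immediate for
    [up u], and for the union of [up u] and [down u] it follows because a word
    [~_n]-equivalent to a proper subword [v] of [u] has no subword of length
    [|v| + 1], hence equals [v].  For minimality one builds a word [W u]
    containing every word shorter than [u] as a subword but not [u] itself
    (and not below [u] when there are at least two letters); then [W u ++ u]
    and [W u] are [~_(|u|-1)]-equivalent while exactly one of them lies above
    [u].  The language [I({u})] is the complement of the union.  Over a
    unary alphabet any two words are comparable, so the union is everything. *)

Section Subwords.
Variable A : finType.
Implicit Types (u v w s t : seq A) (a : A) (m n : nat).

Lemma subseq_size_eq s t : subseq s t -> size t <= size s -> s = t.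
Proof.
by move=> st ts; apply/eqP; rewrite -(size_subseq_leqif st) eqn_leq ts size_subseq.
Qed.

Lemma subseq_eq_or_shorter s t : subseq s t -> s = t \/ size s < size t.
Proof.
move=> st; have [le_st eq_st] := size_subseq_leqif st.
by case: (eqVneq s t) => [|ne_st]; [left | right; rewrite ltn_neqAle eq_st ne_st].
Qed.

Lemma subseq_skip_letter a s u t :
  a \notin s -> subseq (a :: u) (s ++ a :: t) -> subseq u t.
Proof.
elim: s => [|x s IH] /=; first by rewrite eqxx.
by rewrite inE negb_or => /andP[/negbTE-> /IH].
Qed.

Lemma subseq_unary_alphabet s t :
  #|A| <= 1 -> size s <= size t -> subseq s t.
Proof.
move=> /fintype_le1P A1; elim: s t => [|x s IH] [|y t] //= le_st.
by rewrite (A1 y x) eqxx IH.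
Qed.

Lemma simn_subseq n s v w : simn n v w -> size s <= n -> subseq s v = subseq s w.
Proof. by move=> vw; apply: vw. Qed.

Lemma simn_le m n u v : m <= n -> simn n u v -> simn m u v.
Proof. by move=> le_mn uv w le_w; apply: uv; apply: leq_trans le_mn. Qed.

Lemma simn_sym n u v : simn n u v -> simn n v u.
Proof. by move=> uv w le_w; rewrite uv. Qed.

Lemma nPT_le m n (L : lang A) : m <= n -> nPT m L -> nPT n L.
Proof. by move=> le_mn L_m u v /(simn_le le_mn); apply: L_m. Qed.

Lemma nPT_equiv n (L M : lang A) : (forall w, L w <-> M w) -> nPT n L -> nPT n M.
Proof. by move=> LM L_n u v uv; rewrite -!LM; apply: L_n. Qed.

Lemma is_h_equiv n (L M : lang A) : (forall w, L w <-> M w) -> is_h L n -> is_h M n.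
Proof.
move=> LM [L_n L_min]; split; first exact: nPT_equiv L_n.
by move=> m M_m; apply/L_min/(nPT_equiv _ M_m) => w; apply: iff_sym.
Qed.

Lemma nPT_predC n (P : pred (seq A)) :
  nPT n (fun w => ~~ P w) <-> nPT n (fun w => P w).
Proof.
have negb_iff (b c : bool) : (~~ b <-> ~~ c) <-> (b <-> c) by case: b; case: c; intuition.
by split=> P_n u v /P_n; rewrite negb_iff.
Qed.

Lemma is_h_predC n (P : pred (seq A)) :
  is_h (fun w => P w) n -> is_h (fun w => ~~ P w) n.
Proof. by move=> [P_n P_min]; split=> [|m /nPT_predC]; [apply/nPT_predC | apply: P_min]. Qed.

Lemma simn_short_eq n v w : size v < n -> simn n v w -> w = v.
Proof.
move=> lt_vn vw.
have vw_sub : subseq v w by rewrite -(simn_subseq vw (ltnW lt_vn)) subseq_refl.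
apply/esym/(subseq_size_eq vw_sub); rewrite leqNgt; apply/negP => lt_vw.
have size_take_w : size (take (size v).+1 w) = (size v).+1 := size_takel lt_vw.
have : subseq (take (size v).+1 w) v by rewrite (simn_subseq vw) ?size_take_w ?take_subseq.
by move/size_subseq; rewrite size_take_w ltnn.
Qed.

Definition letters_but a : seq A := enum (predC1 a).

Lemma mem_letters_but a x : (x \in letters_but a) = (x != a).
Proof. by rewrite mem_enum inE. Qed.

Lemma size_letters_but a : size (letters_but a) = #|A|.-1.
Proof. by rewrite -cardE cardC1. Qed.

(** [W (a1 ... ak)] is [B1 a1 B2 a2 ... a(k-1) Bk] with [Bi] listing the
    letters other than [ai]: a greedy embedding of [u] must skip every [Bi],
    so it runs out of letters before [ak], while any word shorter than [u]
    embeds by taking its [i]-th letter from [Bi ai]. *)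
Fixpoint W u : seq A :=
  if u is a :: u' then letters_but a ++ (if u' is [::] then [::] else a :: W u')
  else [::].

Lemma W_not_subseq u : u != [::] -> ~~ subseq u (W u).
Proof.
elim: u => [|a [|b u] IH] // _ /=.
  by rewrite cats0 sub1seq mem_letters_but eqxx.
apply/negP => /subseq_skip_letter; rewrite mem_letters_but eqxx => /(_ isT).
exact/negP/IH.
Qed.

Lemma subseq_W u v : size v < size u -> subseq v (W u).
Proof.
elim: u v => [|a [|b u] IH] [|x v] //= lt_vu; rewrite ?sub0seq //.
rewrite -cat1s -[_ ++ _ :: _]cat_rcons; apply: cat_subseq; last exact: IH.
by rewrite sub1seq mem_rcons inE mem_letters_but; case: eqP.
Qed.

Lemma size_W u : 2 <= #|A| -> size u <= size (W u).
Proof.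
move=> A2; have Ba a : 0 < size (letters_but a) by rewrite size_letters_but; lia.
elim: u => [|a [|b u] IH] //=; first by rewrite cats0 Ba.
by move: IH (Ba a); rewrite size_cat /=; lia.
Qed.

Lemma simn_W_cat u : simn (size u).-1 (W u ++ u) (W u).
Proof.
move=> w le_w; rewrite /subword; case: w le_w => [|x w] le_w; first by rewrite !sub0seq.
have sub_w : subseq (x :: w) (W u) by apply: subseq_W; move: le_w; case: (size u).
by rewrite sub_w (subseq_trans sub_w (prefix_subseq _ _)).
Qed.

Lemma nPT_size_le u m (L : lang A) :
  L (W u ++ u) -> ~ L (W u) -> nPT m L -> size u <= m.
Proof.
move=> L_Wu notL_W L_m; rewrite leqNgt; apply/negP => lt_mu.
have L_pred : nPT (size u).-1 L by apply: nPT_le L_m; case: (size u) lt_mu.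
by apply: notL_W; apply: (iffLR (L_pred _ _ (@simn_W_cat u))).
Qed.

Lemma is_h_up u : is_h (up u) (size u).
Proof.
split=> [v w vw | m]; first by rewrite /up vw.
case: u => [|a u] //; apply: nPT_size_le; first exact: suffix_subseq.
exact/negP/W_not_subseq.
Qed.

Definition comparable u w : bool := subword u w || subword w u.

Lemma comparable_simn u v w :
  simn (size u) v w -> comparable u v -> comparable u w.
Proof.
rewrite /comparable /subword => vw /orP[uv | vu].
  by rewrite -(simn_subseq vw (leqnn _)) uv.
have [v_u | lt_vu] := subseq_eq_or_shorter vu.
  by rewrite -(simn_subseq vw (leqnn _)) v_u subseq_refl.
by rewrite (simn_short_eq lt_vu vw) vu orbT.
Qed.

Lemma comparable_nPT u : nPT (size u) (fun w => comparable u w).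
Proof. by move=> v w vw; split; apply: comparable_simn => //; apply: simn_sym. Qed.

Lemma comparable_unary_alphabet u w : #|A| <= 1 -> comparable u w.
Proof.
move=> A1; rewrite /comparable /subword.
case: (leqP (size u) (size w)) => [le_uw | /ltnW le_wu].
  by rewrite subseq_unary_alphabet.
by rewrite (subseq_unary_alphabet A1 le_wu) orbT.
Qed.

Lemma comparable_W_cat u : comparable u (W u ++ u).
Proof. by rewrite /comparable /subword suffix_subseq. Qed.

Lemma comparable_W u : 2 <= #|A| -> u != [::] -> ~ comparable u (W u).
Proof.
move=> A2 u0; have notuW := W_not_subseq u0.
rewrite /comparable /subword (negbTE notuW) => /subseq_size_eq/(_ (size_W _ A2)) Wu.
by move: notuW; rewrite Wu subseq_refl.
Qed.

Lemma is_h_comparable u :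
  is_h (fun w => comparable u w) (if 2 <= #|A| then size u else 0).
Proof.
case: ifP => [A2 | /negbT]; last first.
  by rewrite -ltnNge ltnS => A1; split=> // v w _; rewrite !comparable_unary_alphabet.
split=> [|m]; first exact: comparable_nPT.
case: u => [|a u] //; apply: nPT_size_le; first exact: comparable_W_cat.
exact: comparable_W.
Qed.

End Subwords.

Theorem proposition8 (A : finType) (u : seq A) :
  is_h (up u) (size u) /\
  is_h (Inc (singleton u)) (if 2 <= #|A| then size u else 0) /\
  is_h (lunion (up u) (down u)) (if 2 <= #|A| then size u else 0).
Proof.
have h_cmp := @is_h_comparable A u.
split; first exact: is_h_up.
split.
  apply: is_h_equiv (is_h_predC h_cmp) => w.
  rewrite /Inc /singleton /incomp /comparable negb_or.
  by split=> [/andP[uw wu] | [v [-> [wu uw]]]]; [exists u | rewrite uw wu].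
apply: is_h_equiv h_cmp => w; rewrite /lunion /up /down /comparable.
by split=> [/orP[]|[]->]; rewrite ?orbT; [left|right|..].
Qed.
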